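(* Consider the voter model with zealots on the complete graph with $n$ nodes, $z_0$ zealots holding opinion $0$ and $z_1$ zealots holding opinion $1$, where $z_0+z_1>0$. Let $N_1(t)$ be the number of opinion-1 holders at time $t$ (including 1-zealots), a continuous-time Markov chain on $\mathcal{S}=\{z_1,\ldots,n-z_0\}$, and let $\boldsymbol{\pi}=(\pi_k)_{k\in\mathcal{S}}$ be its stationary distribution, i.e. the probability vector on $\mathcal{S}$ satisfying $\boldsymbol{\pi}Q=0$, where $Q$ is the transition rate matrix with $q_{k,k-1}=(k-z_1)(n-k)/(n-1)$, $q_{k,k+1}=k(n-k-z_0)/(n-1)$, $q_{k,k}=-q_{k,k-1}-q_{k,k+1}$ and all other entries zero. Then the expected number of opinion-1 holders at equilibrium is $$\mathbb{E}_{\boldsymbol{\pi}}N_1=\sum_{k\in\mathcal{S}}k\,\pi_k=n\,\frac{z_1}{z_0+z_1}.$$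
   Context: Model: $n$ users are the nodes of a complete graph without self-loops, each holding opinion $0$ or $1$. Among them, $z_0\ge 0$ are 0-zealots (always hold opinion 0) and $z_1\ge0$ are 1-zealots (always hold opinion 1), with $z_0+z_1>0$ and $z_0+z_1\le n$; the remaining users are non-zealots. Each user has an independent exponential clock of rate 1; when a non-zealot's clock rings, that user picks one of the other $n-1$ users uniformly at random and adopts their current opinion; zealots never change opinion. $N_1(t)$ counts users holding opinion 1 at time $t$, including 1-zealots; it is a birth-and-death chain on $\mathcal{S}$ with the rates given in the claim. *)

From HB Require Import structures.
From mathcomp Require Import all_boot all_order all_algebra.
Set Implicit Arguments. Unset Strict Implicit. Unset Printing Implicit Defensive.
Import Order.TTheory GRing.Theory Num.Theory.
Local Open Scope ring_scope.

Definition in_S (n z0 z1 k : nat) : bool := (z1 <= k)%N && (k <= n - z0)%N.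

Definition rate_down (R : fieldType) (n z0 z1 k : nat) : R :=
  ((k - z1)%:R * (n - k)%:R) / (n - 1)%:R.

Definition rate_up (R : fieldType) (n z0 z1 k : nat) : R :=
  (k%:R * (n - k - z0)%:R) / (n - 1)%:R.

Definition Qrate (R : fieldType) (n z0 z1 k j : nat) : R :=
  if j.+1 == k then rate_down R n z0 z1 k
  else if j == k.+1 then rate_up R n z0 z1 k
  else if j == k then - (rate_down R n z0 z1 k + rate_up R n z0 z1 k)
  else 0.

Definition stationary (R : realFieldType) (n z0 z1 : nat) (pi : nat -> R) : Prop :=
  [/\ (forall k, in_S n z0 z1 k -> 0 <= pi k),
      \sum_(z1 <= k < (n - z0).+1) pi k = 1
    & forall j, in_S n z0 z1 j ->
        \sum_(z1 <= k < (n - z0).+1) pi k * Qrate R n z0 z1 k j = 0].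

From HB Require Import structures.
From mathcomp Require Import all_boot all_order all_algebra.
From mathcomp Require Import zify ring.
Import Order.TTheory GRing.Theory Num.Theory.
Local Open Scope ring_scope.

(* The drift of N_1 at state k, i.e. the generator Q applied to the identity,
   is (z1 n - (z0 + z1) k) / (n - 1), affine in k.  Since pi Q = 0, its
   pi-average vanishes, which gives z1 n = (z0 + z1) E_pi N_1.  For n = 1 the
   rates divide by zero (and are 0 in Rocq), but then S = {z1} is a single
   state and z0 + z1 = 1. *)

Lemma sum_nat_if_eq (V : nmodType) (a b m : nat) (F : nat -> V) :
  \sum_(a <= j < b) (if j == m then F j else 0) = if (a <= m < b)%N then F m else 0.
Proof. by rewrite -big_mkcond big_nat1_eq. Qed.

Section Generator.

Variables (R : fieldType) (n z0 z1 : nat).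

Local Notation D := (rate_down R n z0 z1).
Local Notation U := (rate_up R n z0 z1).
Local Notation Q := (Qrate R n z0 z1).

Lemma rate_down_min k : (k <= z1)%N -> D k = 0.
Proof. by move=> le_k_z1; rewrite /rate_down (_ : k - z1 = 0)%N ?mul0r //; lia. Qed.

Lemma rate_up_max k : (n - z0 <= k)%N -> U k = 0.
Proof. by move=> le_k; rewrite /rate_up (_ : n - k - z0 = 0)%N ?mulr0 ?mul0r //; lia. Qed.

Lemma QrateE k j :
  Q k j = (if j == k.+1 then U k else 0) + (if j.+1 == k then D k else 0)
          - (if j == k then D k + U k else 0).
Proof.
rewrite /Qrate; case: (eqVneq j.+1 k) => [<-|ne_jk].
  have [-> ->] : (j == j.+2) = false /\ (j == j.+1) = false by split; lia.
  by rewrite subr0 add0r.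
case: (eqVneq j k.+1) => [->|_].
  have -> : (k.+1 == k) = false by lia.
  by rewrite addr0 subr0.
by case: (j == k); rewrite !add0r ?sub0r ?oppr0.
Qed.

Lemma generator_Qrate k (f : nat -> R) : in_S n z0 z1 k ->
  \sum_(z1 <= j < (n - z0).+1) Q k j * f j
  = U k * (f k.+1 - f k) + D k * (f k.-1 - f k).
Proof.
move=> /andP[ge_k le_k].
under eq_bigr => j _ do
  rewrite QrateE !mulrDl mulNr !(fun_if (fun x => x * f j)) !mul0r.
rewrite !big_split sumrN /= !sum_nat_if_eq.
have -> : (if (z1 <= k.+1 < (n - z0).+1)%N then U k * f k.+1 else 0) = U k * f k.+1.
  by case: ifP => // /negbT out_k; rewrite rate_up_max ?mul0r //; lia.
have -> : \sum_(z1 <= j < (n - z0).+1) (if j.+1 == k then D k * f j else 0)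
          = D k * f k.-1.
  case: k ge_k le_k => [|m] ge_k le_k.
    by rewrite rate_down_min // mul0r big1.
  under eq_bigr do rewrite eqSS.
  rewrite sum_nat_if_eq /=; case: ifP => // /negbT out_m.
  by rewrite rate_down_min ?mul0r //; lia.
rewrite ifT; last lia.
rewrite mulrDl; ring.
Qed.

Lemma drift_Qrate k : in_S n z0 z1 k ->
  \sum_(z1 <= j < (n - z0).+1) Q k j * j%:R = U k - D k.
Proof.
move=> k_in_S; rewrite generator_Qrate //.
case: k k_in_S => [|k] /andP[ge_k _] /=.
  rewrite rate_down_min //; ring.
rewrite -!(addn1 k.+1) -(addn1 k) !natrD; ring.
Qed.

Lemma drift_rate k : (z0 <= n)%N -> in_S n z0 z1 k ->
  U k - D k = ((z1 * n)%:R - k%:R * (z0 + z1)%:R) / (n - 1)%:R.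
Proof.
move=> le_z0n /andP[ge_k le_k].
rewrite /rate_up /rate_down -mulrBl; congr (_ / _).
rewrite natrB; last lia.
rewrite !natrB ?natrM ?natrD; [ring | lia | lia].
Qed.

End Generator.

Section Stationary.

Variables (R : realFieldType) (n z0 z1 : nat) (pi : nat -> R).
Hypothesis pi_st : stationary n z0 z1 pi.

Lemma stationary_generator_sum_eq0 (f : nat -> R) :
  \sum_(z1 <= k < (n - z0).+1)
     pi k * \sum_(z1 <= j < (n - z0).+1) Qrate R n z0 z1 k j * f j = 0.
Proof.
case: pi_st => _ _ pi_Q0.
under eq_bigr do rewrite big_distrr.
rewrite exchange_big /= big_nat_cond big1 // => j /andP[range_j _].
under eq_bigr do rewrite mulrA.
by rewrite -big_distrl /= pi_Q0 ?mul0r.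
Qed.

Lemma stationary_mean_balance : (z0 <= n)%N -> (1 < n)%N ->
  (z0 + z1)%:R * \sum_(z1 <= k < (n - z0).+1) k%:R * pi k = (z1 * n)%:R.
Proof.
move=> le_z0n n_gt1.
have n1_neq0 : (n - 1)%:R != 0 :> R by rewrite pnatr_eq0; lia.
have := stationary_generator_sum_eq0 (fun j => j%:R).
rewrite big_nat_cond (eq_bigr (fun k =>
    ((z1 * n)%:R * pi k - (z0 + z1)%:R * (k%:R * pi k)) / (n - 1)%:R)); last first.
  move=> k /andP[range_k _]; have k_in_S : in_S n z0 z1 k by apply/andP; lia.
  by rewrite drift_Qrate // drift_rate //; ring.
rewrite -big_nat_cond -mulr_suml => /eqP.
rewrite mulf_eq0 invr_eq0 (negPf n1_neq0) orbF sumrB -!mulr_sumr.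
by case: pi_st => _ -> _; rewrite mulr1 subr_eq0 eq_sym => /eqP.
Qed.

End Stationary.

Theorem theorem3 (R : realFieldType) (n z0 z1 : nat) (pi : nat -> R) :
  (0 < z0 + z1)%N -> (z0 + z1 <= n)%N ->
  stationary n z0 z1 pi ->
  \sum_(z1 <= k < (n - z0).+1) k%:R * pi k = n%:R * z1%:R / (z0 + z1)%:R.
Proof.
move=> z_gt0 le_zn pi_st.
have [n1 | n_neq1] := eqVneq n 1%N.
  subst n; case: pi_st => _ + _.
  have [-> ->] : (1 - z0 = z1)%N /\ (z0 + z1 = 1)%N by lia.
  by rewrite !big_nat1 => ->; rewrite mulr1 mul1r divr1.
have zsum_neq0 : (z0 + z1)%:R != 0 :> R by rewrite pnatr_eq0 -lt0n.
apply: (mulfI zsum_neq0).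
have [le_z0n n_gt1] : (z0 <= n)%N /\ (1 < n)%N by lia.
by rewrite stationary_mean_balance // mulrCA divff // mulr1 natrM mulrC.
Qed.
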